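(* Let $D\subset\mathbb{C}$ be an open disk centered at the origin, let $f_1,\dots,f_p:D\to\mathbb{C}$ be analytic, let $A_1,\dots,A_p\in\mathbb{C}^{n\times n}$, and let $M(\lambda)=\sum_{m=1}^p f_m(\lambda)A_m$. Assume $M$ is symmetric, i.e. $M(\lambda)^T=M(\lambda)$ for all $\lambda\in D$ (transpose, not conjugate transpose). Put $M_j:=M^{(j)}(0)$ for $j\ge 0$. The relations $$c_{i,1}=\frac{1}{i+1}\quad (i\ge 1),\qquad c_{i-1,j}=\frac{j}{i}\,c_{i,j-1}\quad (i,j>1)$$ uniquely determine an infinite scalar matrix $\mathbf{C}=[c_{i,j}]_{i,j=1}^\infty$. Define the infinite block matrix $\mathbf{S}=[S_{i,j}]_{i,j=1}^\infty$ with $n\times n$ blocks by $S_{1,1}=I$, $S_{1,j}=S_{j,1}=0$ for $j\ge 2$, and $S_{i,j}=c_{i-1,j-1}M_{i+j-2}$ for $i,j\ge 2$. Let $\mathbf{A}=\operatorname{diag}(-M_0,I,I,I,\dots)$ (block diagonal), and let $\mathbf{B}$ be the infinite block matrix whose first block row is $\big(M_1,\tfrac12 M_2,\tfrac13 M_3,\tfrac14 M_4,\dots\big)$, whose blocks in positions $(j+1,j)$ are $\tfrac1j I$ for $j\ge1$, and whose other blocks are zero. Then $\mathbf{S}$ is a symmetrizer for the infinite linear eigenvalue problem $\mathbf{A}\mathbf{x}=\lambda\mathbf{B}\mathbf{x}$: the infinite matrices $\mathbf{S}\mathbf{A}$ and $\mathbf{S}\mathbf{B}$ (each block of which is a finite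 sum) are symmetric, so that $\mathbf{S}\mathbf{A}\mathbf{x}=\lambda\mathbf{S}\mathbf{B}\mathbf{x}$ is a symmetric eigenvalue problem.
   Context: The infinite eigenvalue problem $\mathbf{A}\mathbf{x}=\lambda\mathbf{B}\mathbf{x}$ is a linearization of $M(\lambda)x=0$: if $M(\lambda)x=0$ then $\mathbf{x}=\big(\tfrac{\lambda^0}{0!}x,\tfrac{\lambda^1}{1!}x,\tfrac{\lambda^2}{2!}x,\dots\big)$ satisfies it. Symmetric for an infinite block matrix means its $(i,j)$ block equals the transpose of its $(j,i)$ block. *)

From mathcomp Require Import all_boot all_order all_algebra.
From mathcomp Require Import classical_sets boolp reals topology normedtype sequences derive.
From mathcomp Require Import complex.
Import numFieldNormedType.Exports.

Set Implicit Arguments.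
Unset Strict Implicit.
Unset Printing Implicit Defensive.
Import Order.TTheory GRing.Theory Num.Theory.
Local Open Scope classical_set_scope.
Local Open Scope ring_scope.

(* The complex numbers C = R[i] over an abstract real field R : realType,
   seen as a numFieldType (hence a normed module over itself, so that
   complex derivatives [derive1] make sense). *)
Definition CC (R : realType) : numFieldType := R[i].

Definition disk (R : realType) (r : R) : set (CC R) :=
  [set z : CC R | `|z| < (Complex r 0 : CC R)].

Definition analytic_on (R : realType) (D : set (CC R)) (f : CC R -> CC R) :=
  forall z0, D z0 ->
    exists (a : nat -> CC R) (r : R), 0 < r /\
      forall z : CC R, `|z - z0| < (Complex r 0 : CC R) ->
        (fun N : nat => \sum_(k < N) a k * (z - z0) ^+ k) @ \oo --> f z.

Definition Mfun (R : realType) (n p : nat) (f : 'I_p -> CC R -> CC R)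
  (A : 'I_p -> 'M[CC R]_n) (l : CC R) : 'M[CC R]_n :=
  \sum_(m < p) f m l *: A m.

Definition Mder (R : realType) (n p : nat) (f : 'I_p -> CC R -> CC R)
  (A : 'I_p -> 'M[CC R]_n) (j : nat) : 'M[CC R]_n :=
  \matrix_(a < n, b < n) derive1n j (fun l => Mfun f A l a b) 0.

(* Infinite block matrices with n x n blocks, indexed 1-based:
   X i j for i, j >= 1 (index 0 is unused). *)
Definition bmat (K : Type) (n : nat) := nat -> nat -> 'M[K]_n.

Definition Sblk (K : fieldType) (n : nat) (c : nat -> nat -> K)
  (Mj : nat -> 'M[K]_n) : bmat K n :=
  fun i j =>
    if (i == 1%N) && (j == 1%N) then 1%:M
    else if (2 <= i)%N && (2 <= j)%N then c i.-1 j.-1 *: Mj (i + j - 2)%N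
    else 0.

Definition Ablk (K : fieldType) (n : nat) (Mj : nat -> 'M[K]_n) : bmat K n :=
  fun i j =>
    if (i == 1%N) && (j == 1%N) then - Mj 0%N
    else if (2 <= i)%N && (i == j) then 1%:M
    else 0.

Definition Bblk (K : fieldType) (n : nat) (Mj : nat -> 'M[K]_n) : bmat K n :=
  fun i j =>
    if (i == 1%N) && (1 <= j)%N then (j%:R)^-1 *: Mj j
    else if (1 <= j)%N && (i == j.+1) then (j%:R)^-1 *: 1%:M
    else 0.

Definition bprod_block (K : fieldType) (n : nat) (X Y : bmat K n)
  (i j : nat) (P : 'M[K]_n) : Prop :=
  exists N0 : nat, forall N : nat, (N0 <= N)%N ->
    \sum_(1 <= k < N) X i k *m Y k j = P.

Definition bprod_symmetric (K : fieldType) (n : nat) (X Y : bmat K n) : Prop :=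
  forall i j : nat, (1 <= i)%N -> (1 <= j)%N ->
    exists P : 'M[K]_n, bprod_block X Y i j P /\ bprod_block X Y j i P^T.

From mathcomp Require Import all_boot all_order all_algebra.
From mathcomp Require Import classical_sets boolp reals topology normedtype sequences derive.
From mathcomp Require Import complex.
Import numFieldNormedType.Exports.
Import Order.TTheory GRing.Theory Num.Theory.
Local Open Scope ring_scope.

(* The recursion forces c_{a,b} = 1 / 'C(a+b, a), so c is symmetric and so is
   the block matrix S.  Since A is block diagonal and every block column of B
   has at most two nonzero blocks, each block of SA or SB is a sum of at most
   two products: (SA)_{ij} = S_{ij} A_{jj}, while (SB)_{ij} is a multiple of
   M_{i+j-1} whose coefficient is symmetric in i, j by the recursion for c.
   Finally every M_j is symmetric because the entries (a,b) and (b,a) of M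
   agree near 0, hence so do all their derivatives. *)

Section BlockProduct.
Variables (K : fieldType) (n : nat) (X Y : bmat K n).

Lemma bprod_block_col_support (i j : nat) (s : seq nat) :
  uniq s -> all (leq 1) s -> (forall k, k \notin s -> Y k j = 0) ->
  bprod_block X Y i j (\sum_(k <- s) X i k *m Y k j).
Proof.
move=> s_uniq s_pos Y0; exists (\max_(k <- s) k).+1 => N le_sN.
have s_sub k : k \in s -> k \in index_iota 1 N.
  move=> ks; rewrite mem_index_iota (allP s_pos) //=.
  by apply: leq_trans le_sN; rewrite ltnS (leq_bigmax_seq (F := id) _ ks).
rewrite (bigID (mem s)) /= [X in _ + X]big1 ?addr0; last first.
  by move=> k /Y0 ->; rewrite mulmx0.
rewrite -big_filter; apply: perm_big; apply: uniq_perm => //.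
  by rewrite filter_uniq // iota_uniq.
by move=> k; rewrite mem_filter andb_idr // => /s_sub.
Qed.

End BlockProduct.

Section Symmetrizer.
Variables (K : fieldType) (n : nat) (c : nat -> nat -> K) (M : nat -> 'M[K]_n).
Hypothesis K_char0 : [pchar K] =i pred0.
Hypothesis c_col1 : forall i, (1 <= i)%N -> c i 1%N = (i.+1%:R)^-1.
Hypothesis c_rec : forall i j, (1 < i)%N -> (1 < j)%N ->
  c i.-1 j = (j%:R / i%:R) * c i j.-1.

Let natf_neq0 m : (0 < m)%N -> m%:R != 0 :> K.
Proof. by rewrite lt0n => m_neq0; rewrite ((pcharf0P K).1 K_char0). Qed.

Lemma symmetrizer_coefE a b : (1 <= a)%N -> (1 <= b)%N ->
  c a b = ('C(a + b, a)%:R)^-1.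
Proof.
move=> a_gt0; elim: b a a_gt0 => // -[_ a a_gt0 _ | b IH a a_gt0 _].
  by rewrite c_col1 // addn1 binSn.
rewrite -[a in c a]/(a.+1.-1) c_rec //= IH // addSnnS.
have /(congr1 (fun m => m%:R : K)) := mul_bin_left (a + b.+2) a.
rewrite -addnBAC // subnn add0n !natrM => binE.
by rewrite -mulrA -invfM binE invfM mulrA mulfV ?mul1r ?natf_neq0.
Qed.

Lemma symmetrizer_coefC a b : (1 <= a)%N -> (1 <= b)%N -> c a b = c b a.
Proof.
move=> a_gt0 b_gt0; rewrite !symmetrizer_coefE // [(b + a)%N]addnC.
by rewrite -[in LHS]bin_sub ?leq_addr // addKn.
Qed.

Hypothesis trM : forall j, (M j)^T = M j.

Local Notation S := (Sblk c M).
Local Notation A := (Ablk M).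
Local Notation B := (Bblk M).

Lemma Sblk_row1 j : j != 1%N -> S 1 j = 0.
Proof. by rewrite /Sblk eqxx /= => /negbTE ->. Qed.

Lemma Sblk_col1 i : i != 1%N -> S i 1 = 0.
Proof. by rewrite /Sblk andbF => /negbTE ->. Qed.

Lemma Sblk_ge2 i j : (2 <= i)%N -> (2 <= j)%N ->
  S i j = c i.-1 j.-1 *: M (i + j - 2).
Proof. by move=> i2 j2; rewrite /Sblk i2 j2; case: i i2 => [|[|i]]. Qed.

Lemma trmx_Sblk i j : (S i j)^T = S j i.
Proof.
rewrite /Sblk andbC [(2 <= j)%N && _]andbC; case: ifP => _; first exact: trmx1.
case: ifP => [/andP[i2 j2] | _]; last exact: trmx0.
by rewrite linearZ /= trM symmetrizer_coefC -?subn1 ?subn_gt0 // addnC.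
Qed.

Lemma Ablk_offdiag k j : k != j -> A k j = 0.
Proof.
rewrite /Ablk => /negbTE kj; rewrite kj andbF; case: ifP => // /andP[/eqP k1 /eqP j1].
by rewrite k1 j1 in kj.
Qed.

Lemma Sblk_mulA i j :
  S i j *m A j j = if (i == 1%N) && (j == 1%N) then - M 0 else S i j.
Proof.
case: (eqVneq j 1) => [->|j_neq1]; first case: (eqVneq i 1) => [->|i_neq1].
- by rewrite mul1mx.
- by rewrite Sblk_col1 // mul0mx.
rewrite andbF; case: j j_neq1 => [_|[//|j _]]; last by rewrite /Ablk /= eqxx mulmx1.
by rewrite /Ablk /Sblk !andbF mulmx0.
Qed.

Lemma SA_block i j : (1 <= j)%N ->
  bprod_block S A i j (if (i == 1%N) && (j == 1%N) then - M 0 else S i j).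
Proof.
move=> j_gt0; rewrite -Sblk_mulA.
have := @bprod_block_col_support _ _ S A i j [:: j]; rewrite big_seq1.
by apply; rewrite /= ?j_gt0 // => k; rewrite inE; apply: Ablk_offdiag.
Qed.

Lemma SA_symmetric : bprod_symmetric S A.
Proof.
move=> i j i_gt0 j_gt0; eexists; split; first exact: SA_block.
rewrite andbC; case: ifP (SA_block j i i_gt0) => _.
  by rewrite linearN /= trM.
by rewrite trmx_Sblk.
Qed.

Lemma Bblk_col_support j k : k \notin [:: 1%N; j.+1] -> B k j = 0.
Proof.
by rewrite !inE negb_or => /andP[k1 kj]; rewrite /Bblk (negbTE k1) (negbTE kj) andbF.
Qed.

Definition SB_coef i j : K := if i == 1%N then j%:R^-1 else j%:R^-1 * c i.-1 j.

Lemma Sblk_mulB i j : (1 <= i)%N -> (1 <= j)%N ->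
  S i 1 *m B 1 j + S i j.+1 *m B j.+1 j = SB_coef i j *: M (i + j).-1.
Proof.
case: j => // j i_gt0 _; rewrite /Bblk /SB_coef /=.
case: i i_gt0 => [//|[_ | i _]].
  by rewrite (Sblk_row1 j.+2) // mul0mx addr0 [S 1 1]/Sblk /= mul1mx.
rewrite (Sblk_col1 i.+2) // Sblk_ge2 // mul0mx add0r -scalemxAl eqxx -scalemxAr.
by rewrite mulmx1 scalerA mulrC addnS !subSS subn0.
Qed.

Lemma SB_coefC i j : (1 <= i)%N -> (1 <= j)%N -> SB_coef i j = SB_coef j i.
Proof.
rewrite /SB_coef; case: i => [//|[_ | i _]]; case: j => [//|[//| j _]] /=.
- by rewrite c_col1 // invr1 mul1r.
- by rewrite c_col1 // invr1 mul1r.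
rewrite -[i.+1]/(i.+2.-1) c_rec // -mulrA mulKf ?natf_neq0 //=.
by rewrite symmetrizer_coefC.
Qed.

Lemma SB_block i j : (1 <= i)%N -> (1 <= j)%N ->
  bprod_block S B i j (SB_coef i j *: M (i + j).-1).
Proof.
move=> i_gt0 j_gt0; rewrite -Sblk_mulB //.
have := @bprod_block_col_support _ _ S B i j [:: 1%N; j.+1].
rewrite big_cons big_seq1; apply=> //; last exact: Bblk_col_support.
by rewrite /= inE andbT eq_sym -lt0n.
Qed.

Lemma SB_symmetric : bprod_symmetric S B.
Proof.
move=> i j i_gt0 j_gt0; eexists; split; first exact: SB_block.
by rewrite linearZ /= trM SB_coefC // addnC; apply: SB_block.
Qed.

End Symmetrizer.

Lemma near_eq_derive1n (K : numFieldType) (V : normedModType K)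
    (g h : K -> V) (x : K) :
  (\forall y \near x, g y = h y) ->
  forall j, \forall y \near x, derive1n j g y = derive1n j h y.
Proof.
move=> gh; elim=> [//|j IH]; apply: filterS (nbhs_interior IH) => y gh_near_y.
by rewrite !derive1nS !derive1E; apply: near_eq_derive.
Qed.

Lemma trmx_derive1n_mx (K : numFieldType) (n : nat) (F : K -> 'M[K]_n) (x : K) j :
  (\forall y \near x, (F y)^T = F y) ->
  (\matrix_(a, b) derive1n j (fun y => F y a b) x)^T =
    \matrix_(a, b) derive1n j (fun y => F y a b) x.
Proof.
move=> F_sym; apply/matrixP => a b; rewrite !mxE.
apply: (@nbhs_singleton _ x (fun y => _ y = _ y)); apply: near_eq_derive1n.
by apply: filterS F_sym => y /(congr1 (fun N : 'M_n => N a b)); rewrite mxE.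
Qed.

Lemma disk_nbhs0 (R : realType) (r : R) : 0 < r -> nbhs (0 : CC R) (disk r).
Proof.
move=> r_gt0; apply/(@nbhs_normP _ (CC R)); exists (Complex r 0 : CC R).
  by rewrite /= ltcE /= eqxx r_gt0.
by move=> z; rewrite /ball_ /= sub0r normrN.
Qed.

Theorem theorem2 (R : realType) (r : R) (n p : nat)
  (f : 'I_p -> CC R -> CC R) (A : 'I_p -> 'M[CC R]_n)
  (c : nat -> nat -> CC R) :
  0 < r ->
  (forall m, analytic_on (disk r) (f m)) ->
  (forall l, disk r l -> (Mfun f A l)^T = Mfun f A l) ->
  (forall i, (1 <= i)%N -> c i 1%N = (i.+1%:R)^-1) ->
  (forall i j, (1 < i)%N -> (1 < j)%N -> c i.-1 j = (j%:R / i%:R) * c i j.-1) ->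
  bprod_symmetric (Sblk c (Mder f A)) (Ablk (Mder f A)) /\
  bprod_symmetric (Sblk c (Mder f A)) (Bblk (Mder f A)).
Proof.
move=> r_gt0 _ M_sym c_col1 c_rec.
have trM j : (Mder f A j)^T = Mder f A j.
  apply: trmx_derive1n_mx; apply: (filterS M_sym); exact: disk_nbhs0.
split; first exact: SA_symmetric (pchar_num _) c_col1 c_rec trM.
exact: SB_symmetric (pchar_num _) c_col1 c_rec trM.
Qed.
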